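(* Fix integers/reals $d\ge1$, $L\ge1$ and $q>d$. Then $\Phi(\mathcal{H}_L)\le C_{d,q}L^d$ for a finite constant $C_{d,q}$ depending only on $(d,q)$, and consequently $\mathbb{D}_{\mathrm{onl}}(\mathcal{H}_L)\le 4\cdot 2^{q-1}C_{d,q}L^d$.
   Context: $\mathcal{X}=[-1,1]^d$, $\mathcal{Y}=[0,1]$, $\mathcal{H}_L=\{h:\mathcal X\to[0,1]: |h(x)-h(x')|\le L\|x-x'\|_\infty\ \forall x,x'\}$. Loss $\ell_q(y,y')=|y-y'|^q$ ($q\ge1$), which is a $2^{q-1}$-approximate pseudo-metric; the induced metric is $d_\ell(f,g)=\sup_x\ell_q(f(x),g(x))=\|f-g\|_\infty^q$. $N(U,\varepsilon)$ is the minimal size of $S\subseteq\mathcal{H}_L$ with every $u\in U$ within $d_\ell$-distance $\le\varepsilon$ of $S$; $\Phi(U)=\int_0^{\operatorname{diam}(\mathcal{H}_L)}\log_2 N(U,\varepsilon)d\varepsilon$ where $\operatorname{diam}(\mathcal{H}_L)=\sup_{f,g}d_\ell(f,g)$. Online dimension $\mathbb{D}_{\mathrm{onl}}$: for scaled Littlestone trees (internal nodes $u\in\{0,1\}^{<D}$ labeled $x_u\in\mathcal X$, edges labeled $s_{u,0},s_{u,1}\in\mathcal Y$, gap $\gamma_u=\ell_q(s_{u,0},s_{u,1})$) realizable by $\mathcal{H}_L$ (every finite prefix of every branch consistent with some $h\in\mathcal H_L$, i.e. $h(x_{b_{\le t}})=s_{b_{\le t},b_{t+1}}$), $\mathbb{D}_{\mathrm{onl}}(\mathcal{H}_L)=\sup_{\mathcal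 T}\inf_b\sum_t\gamma_{b_{\le t}}$. *)

From HB Require Import structures.
From mathcomp Require Import all_boot all_order all_algebra.
From mathcomp Require Import all_classical all_reals all_analysis.
Unset Strict Implicit. Unset Printing Implicit Defensive.
Import Order.TTheory GRing.Theory Num.Theory.
Local Open Scope classical_set_scope.
Local Open Scope ring_scope.

Definition pt (R : realType) (d : nat) := 'I_d -> R.

Definition supnorm {R : realType} {d : nat} (x y : pt R d) : R :=
  \big[Num.max/0]_(i < d) `|x i - y i|.

Definition Xdom {R : realType} (d : nat) : set (pt R d) :=
  [set x | forall i, -1 <= x i <= 1].

(* H_L : functions X -> [0,1] that are L-Lipschitz w.r.t. ||.||_oo.
   (Functions are total on R^d; only their values on X matter.) *)
Definition HL {R : realType} (d : nat) (L : R) : set (pt R d -> R) :=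
  [set h | (forall x, Xdom d x -> 0 <= h x <= 1) /\
           (forall x y, Xdom d x -> Xdom d y -> `|h x - h y| <= L * supnorm x y)].

Definition lossq {R : realType} (q : R) (y y' : R) : R := `|y - y'| `^ q.

Definition dl {R : realType} {d : nat} (q : R) (f g : pt R d -> R) : \bar R :=
  ereal_sup [set (lossq q (f x) (g x))%:E | x in Xdom d].

Definition diamH {R : realType} (d : nat) (q L : R) : \bar R :=
  ereal_sup [set dl q f g | f in HL d L & g in HL d L].

(* N(U, eps): minimal size of S subset H_L with every u in U within d_l-distance
   eps of S; S is given as the image of g : 'I_n -> H_L.  (+oo if no finite S.) *)
Definition covnum {R : realType} {d : nat} (q L : R)
    (U : set (pt R d -> R)) (eps : R) : \bar R :=
  ereal_inf [set (n%:R)%:E | n in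
    [set n : nat | exists g : 'I_n -> (pt R d -> R),
       (forall i, HL d L (g i)) /\
       (forall u, U u -> exists i, (dl q u (g i) <= eps%:E)%E)]].

Definition log2e {R : realType} (x : \bar R) : \bar R :=
  match x with
  | r%:E => (ln r / ln 2)%:E
  | +oo%E => +oo%E
  | -oo%E => -oo%E
  end.

Definition Phi {R : realType} (d : nat) (q L : R) (U : set (pt R d -> R)) : \bar R :=
  (\int[lebesgue_measure]_(e in [set e : R | (0 <= e)%R /\ (e%:E <= diamH d q L)%E])
     log2e (covnum q L U e))%E.

(* Scaled Littlestone trees. Nodes are bit strings u : seq bool; depth D is
   Some n (finite) or None (infinite). Node u is internal iff size u < D. *)
Definition internal (D : option nat) (k : nat) : bool :=
  if D is Some n then (k < n)%N else true.

Definition pref (b : nat -> bool) (t : nat) : seq bool := [seq b i | i <- iota 0 t].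

Record SLtree (R : realType) (d : nat) := mkSLtree {
  depth : option nat;
  xlab : seq bool -> pt R d;
  slab : seq bool -> bool -> R
}.
Arguments depth {R d}. Arguments xlab {R d}. Arguments slab {R d}.

Definition well_labeled {R : realType} {d : nat} (T : SLtree R d) : Prop :=
  forall u : seq bool, internal (depth T) (size u) ->
    Xdom d (xlab T u) /\ (forall c, 0 <= slab T u c <= 1).

Definition realizable {R : realType} {d : nat} (L : R) (T : SLtree R d) : Prop :=
  forall (b : nat -> bool) (t : nat),
    (if depth T is Some n then (t <= n)%N else true) ->
    exists h, HL d L h /\
      forall k, (k < t)%N -> h (xlab T (pref b k)) = slab T (pref b k) (b k).

Definition gap {R : realType} {d : nat} (q : R) (T : SLtree R d) (u : seq bool) : R :=
  lossq q (slab T u false) (slab T u true).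

Definition branch_val {R : realType} {d : nat} (q : R) (T : SLtree R d)
    (b : nat -> bool) : \bar R :=
  (\sum_(0 <= t <oo)
     (if internal (depth T) t then (gap q T (pref b t))%:E else 0%E))%E.

Definition Donl {R : realType} (d : nat) (q L : R) : \bar R :=
  ereal_sup [set ereal_inf [set branch_val q T b | b in [set: nat -> bool]]
            | T in [set T : SLtree R d | well_labeled T /\ realizable L T]].

(* Write th = 2^-q.  For e in (th^(k+1), th^k], an L-Lipschitz function is
   determined within loss e by its values, rounded to 2^-(k+2), at the corners of
   a grid of mesh 2^-(k+1)/4L; hence log2 N(H_L, e) <= (32 L 2^k)^d (k+3), and
   Phi(H_L) is dominated by a series in (2^d th)^k, which converges because
   2^d th < 1 exactly when q > d.
   For the online dimension, follow any branch of a realizable tree: the gap at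
   node t is at most 2L times the distance from x_t to any earlier point, so a
   gap larger than th^j forces x_t to be 2^-(j+1)/2L-separated from all earlier
   points.  Such points occupy distinct cells of a grid, at most (16 L 2^j)^d of
   them, and the sum of the gaps is again dominated by a series in (2^d th)^j. *)

From HB Require Import structures.
From mathcomp Require Import all_boot all_order all_algebra.
From mathcomp Require Import all_classical all_reals all_analysis.
From mathcomp Require Import ring lra measurable_realfun.
Set Implicit Arguments.
Unset Strict Implicit.
Unset Printing Implicit Defensive.
Import Order.TTheory GRing.Theory Num.Theory.
Local Open Scope classical_set_scope.
Local Open Scope ring_scope.

Section RealFacts.
Variable R : realType.

Lemma sum_natS_expr_le (r : R) n : 0 <= r < 1 ->
  \sum_(k < n) (k.+1)%:R * r ^+ k <= ((1 - r) ^+ 2)^-1.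
Proof.
move=> /andP[r0 r1].
have closed_form m : (1 - r) ^+ 2 * \sum_(k < m) (k.+1)%:R * r ^+ k =
    1 - (m.+1)%:R * r ^+ m + m%:R * r ^+ m.+1.
  elim: m => [|m IH]; first by rewrite big_ord0 mulr0 expr0 mul1r subrr add0r mul0r.
  by rewrite big_ord_recr /= mulrDr IH !exprS -!natr1; ring.
have sq_gt0 : 0 < (1 - r) ^+ 2 by rewrite exprn_gt0 // subr_gt0.
rewrite -(ler_pM2l sq_gt0) mulfV ?gt_eqF // closed_form.
have shift_le : n%:R * r ^+ n.+1 <= n%:R * r ^+ n.
  by rewrite ler_wpM2l // exprS ler_piMl ?exprn_ge0 // ltW.
have succ_le : n%:R * r ^+ n <= n.+1%:R * r ^+ n.
  by rewrite ler_wpM2r ?exprn_ge0 // ler_nat.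
lra.
Qed.

Lemma sum_expr_le (r : R) n : 0 <= r < 1 ->
  \sum_(k < n) r ^+ k <= ((1 - r) ^+ 2)^-1.
Proof.
move=> r01; apply: le_trans (sum_natS_expr_le n r01).
by apply: ler_sum => k _; rewrite ler_peMl ?exprn_ge0 ?ler1n //; case/andP: r01.
Qed.

Lemma mulrn_expr_le (s r : R) n : 0 <= s <= r -> r < 1 ->
  s ^+ n *+ n <= ((1 - r) ^+ 2)^-1.
Proof.
move=> /andP[s0 sr] r1; have r0 : 0 <= r := le_trans s0 sr.
apply: le_trans (sum_natS_expr_le n.+1 _); last by rewrite r0 r1.
rewrite big_ord_recr /= -[leLHS]add0r lerD //.
  by apply: sumr_ge0 => k _; rewrite mulr_ge0 ?exprn_ge0.
by rewrite -mulr_natl ler_pM ?exprn_ge0 ?ler_nat ?lerXn2r.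
Qed.

Lemma nneseries_le_ub (u : nat -> \bar R) (B : \bar R) :
  (forall n, (0 <= u n)%E) -> (forall k, (\sum_(0 <= i < k) u i <= B)%E) ->
  (\sum_(0 <= i <oo) u i <= B)%E.
Proof.
move=> u0 ub.
have nd := @ereal_nondecreasing_series R u xpredT 0%N (fun n _ _ => u0 n).
rewrite (cvg_lim _ (ereal_nondecreasing_cvgn nd)) //.
by apply: ge_ereal_sup => _ [k _ <-]; exact: ub.
Qed.

Lemma powR_exprn (a q : R) j : 0 <= a -> (a ^+ j) `^ q = (a `^ q) ^+ j.
Proof. by move=> a0; rewrite -powR_mulrn // powRAC powR_mulrn // powR_ge0. Qed.

Lemma powR_le1 (a q : R) : 0 <= a <= 1 -> 0 <= q -> a `^ q <= 1.
Proof.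
move=> /andP[a0 a1] q0; apply: (@le_trans _ _ (1 `^ q)); last by rewrite powR1.
by apply: ge0_ler_powR; rewrite ?nnegrE.
Qed.

Definition scale_ratio (d : nat) (q : R) : R := 2 ^+ d * (2^-1) `^ q.

Lemma scale_ratio_ge0 d q : 0 <= scale_ratio d q.
Proof. by rewrite mulr_ge0 ?exprn_ge0 ?powR_ge0. Qed.

Lemma scale_ratio_lt1 (d : nat) q : d%:R < q -> scale_ratio d q < 1.
Proof.
move=> dq; rewrite /scale_ratio.
have -> : q = d%:R + (q - d%:R) by rewrite addrC subrK.
rewrite powRD; last by apply/implyP => _; rewrite invr_eq0.
rewrite powR_mulrn ?invr_ge0 // mulrA exprVn mulfV ?expf_neq0 // mul1r.
rewrite /powR gt_eqF ?invr_gt0 // expR_lt1 pmulr_rlt0 ?subr_gt0 //.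
by rewrite ln_lt0 // invr_gt0 /= invf_lt1 //; lra.
Qed.

Lemma scale_ratio_ge (d : nat) q : (2^-1) `^ q <= scale_ratio d q.
Proof. by rewrite ler_peMl ?powR_ge0 // exprn_ege1 // ler1n. Qed.

Import HBNNSimple.

(* [f] need not be measurable: it is compared with the simple functions below it. *)
Lemma ge0_integral_le_ae_majorant (D : set R) (f g : R -> \bar R) (N : set R) :
  (forall x, D x -> (0 <= f x)%E) -> measurable_fun setT g ->
  (forall x, (0 <= g x)%E) ->
  measurable N -> (@lebesgue_measure R) N = 0%E ->
  (forall x, D x -> ~ N x -> (f x <= g x)%E) ->
  (\int[lebesgue_measure]_(x in D) f x <= \int[lebesgue_measure]_x g x)%E.
Proof.
move=> f0 mg g0 mN N0 fg.
rewrite ge0_integralE //; apply: ge_ereal_sup => _ [h /= hf <-].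
have -> : sintegral lebesgue_measure h = (\int[lebesgue_measure]_x (h x)%:E)%E.
  by rewrite integral_nnsfun // patch_setT.
apply: ae_ge0_le_integral => //.
- by move=> x _; rewrite lee_fin fun_ge0.
- by apply/measurable_EFinP; exact: measurable_funPT.
- exists N; split => // x /= hx; have [//|Nx] := pselect (N x).
  exfalso; apply: hx => _.
  apply: le_trans (hf x) _; rewrite /patch; case: ifPn => [|_]; last exact: g0.
  by rewrite inE => Dx; apply: fg.
Qed.

End RealFacts.

Section Grid.
Variables (R : realType) (d : nat).
Implicit Types (x y : pt R d) (h : R).

Lemma supnorm_lt x y e : 0 < e -> (forall i, `|x i - y i| < e) -> supnorm x y < e.
Proof. by move=> e0 H; apply: bigmax_lt. Qed.

Lemma supnorm_le x y e : 0 <= e -> (forall i, `|x i - y i| <= e) -> supnorm x y <= e.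
Proof. by move=> e0 H; apply: bigmax_le. Qed.

Lemma supnorm_ge0 x y : 0 <= supnorm x y.
Proof. by rewrite /supnorm; elim/big_ind: _ => //= a b ha hb; rewrite le_max ha. Qed.

Lemma supnormC x y : supnorm x y = supnorm y x.
Proof. by apply: eq_bigr => i _; rewrite distrC. Qed.

(* The cube [-1,1]^d is cut into the cells [-1 + c_i h, -1 + (c_i + 1) h). *)
Definition grid_size h : nat := Num.truncn (2 / h).

Definition cell h x : {ffun 'I_d -> 'I_(grid_size h).+1} :=
  [ffun i => inord (Num.truncn ((x i + 1) / h))].

Definition cell_corner h (c : {ffun 'I_d -> 'I_(grid_size h).+1}) : pt R d :=
  fun i => -1 + (c i)%:R * h.

Lemma card_cells h : #|{ffun 'I_d -> 'I_(grid_size h).+1}| = ((grid_size h).+1 ^ d)%N.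
Proof. by rewrite card_ffun !card_ord. Qed.

Lemma grid_sizeS_le h : 0 < h -> ((grid_size h).+1)%:R <= 2 / h + 1.
Proof. by move=> h0; rewrite -natr1 lerD2r truncn_le divr_ge0 // ltW. Qed.

Lemma cellE h x i : 0 < h -> Xdom d x ->
  (cell h x i : nat) = Num.truncn ((x i + 1) / h).
Proof.
move=> h0 Xx; rewrite ffunE inordK // ltnS; apply: le_truncn.
by rewrite ler_pM2r ?invr_gt0 //; have := Xx i; lra.
Qed.

Lemma cell_coord_bounds h x i : 0 < h -> Xdom d x ->
  (cell h x i)%:R * h <= x i + 1 < (cell h x i)%:R * h + h.
Proof.
move=> h0 Xx; rewrite cellE //.
have ax : 0 <= (x i + 1) / h.
  by rewrite divr_ge0 //; [have := Xx i; lra | exact: ltW].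
move: (truncn_itv ax); set n := Num.truncn _ => /andP[a1 a2].
rewrite -natr1 in a2.
have hx : x i + 1 = (x i + 1) / h * h by rewrite divfK ?gt_eqF.
have -> : n%:R * h + h = (n%:R + 1) * h by ring.
by rewrite hx ler_pM2r // ltr_pM2r // a1.
Qed.

Lemma supnorm_lt_of_cell_eq h x y : 0 < h -> Xdom d x -> Xdom d y ->
  cell h x = cell h y -> supnorm x y < h.
Proof.
move=> h0 Xx Xy e; apply: supnorm_lt => // i.
have /andP[a1 a2] := cell_coord_bounds i h0 Xx.
have /andP[b1 b2] := cell_coord_bounds i h0 Xy.
by rewrite e in a1 a2; rewrite ltr_norml; apply/andP; split; lra.
Qed.

Lemma cell_corner_near h x : 0 < h -> Xdom d x ->
  Xdom d (cell_corner (cell h x)) /\ supnorm x (cell_corner (cell h x)) <= h.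
Proof.
move=> h0 Xx.
have corner i : -1 <= cell_corner (cell h x) i <= x i /\
                x i - cell_corner (cell h x) i <= h.
  have /andP[a1 a2] := cell_coord_bounds i h0 Xx.
  have n0 : 0 <= (cell h x i)%:R * h by rewrite mulr_ge0 // ltW.
  rewrite /cell_corner; split; first (apply/andP; split); lra.
split=> [i|].
  by have [/andP[H1 H2] _] := corner i; have /andP[X1 X2] := Xx i; apply/andP; split; lra.
apply: supnorm_le => [|i]; first exact: ltW.
by have [/andP[H1 H2] H3] := corner i; rewrite ger0_norm; lra.
Qed.

End Grid.

Lemma size_pref (c : nat -> bool) t : size (pref c t) = t.
Proof. by rewrite /pref size_map size_iota. Qed.

Lemma pref_switch (b : nat -> bool) t c k : (k <= t)%N ->
  pref (fun i => if i == t then c else b i) k = pref b k.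
Proof.
move=> kt; apply/eq_in_map => i; rewrite mem_iota add0n => /andP[_ ik].
by rewrite (ltn_eqF (leq_trans ik kt)).
Qed.

Lemma internal_leq D k t : (k <= t)%N -> internal D t -> internal D k.
Proof. by case: D => //= n kt tn; exact: leq_ltn_trans kt tn. Qed.

Lemma sumr_indicator_card (R : numDomainType) n (P : pred 'I_n) :
  \sum_(t < n) ((P t)%:R : R) = (#|P|)%:R.
Proof.
rewrite -sum1_card natr_sum [RHS]big_mkcond /=.
by apply: eq_bigr => t _; rewrite unfold_in; case: (P t).
Qed.

Section Branch.
Variables (R : realType) (d : nat) (q L : R).
Hypotheses (q_ge1 : 1 <= q) (L_ge1 : 1 <= L).
Variable T : SLtree R d.
Hypotheses (T_labels : well_labeled T) (T_realizable : realizable L T).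
Variable b : nat -> bool.

Let L_gt0 : 0 < L. Proof. exact: lt_le_trans ltr01 L_ge1. Qed.
Let q_ge0 : 0 <= q. Proof. exact: le_trans ler01 q_ge1. Qed.

Let x_ t := xlab T (pref b t).
Let s_ t := slab T (pref b t).

Lemma branch_point_Xdom t : internal (depth T) t -> Xdom d (x_ t).
Proof. by move=> it; have := @T_labels (pref b t); rewrite size_pref => /(_ it) []. Qed.

Lemma branch_label01 t c : internal (depth T) t -> 0 <= s_ t c <= 1.
Proof.
by move=> it; have := @T_labels (pref b t); rewrite size_pref => /(_ it) [_ /(_ c)].
Qed.

(* Use the realizability of the branch that turns to [c] at node [t]. *)
Lemma branch_label_lipschitz t k c : internal (depth T) t -> (k < t)%N ->
  `|s_ t c - s_ k (b k)| <= L * supnorm (x_ t) (x_ k).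
Proof.
move=> it kt; pose b' i := if i == t then c else b i.
have [h [[_ h_lip] h_fits]] : exists h, HL d L h /\ forall k, (k < t.+1)%N ->
    h (xlab T (pref b' k)) = slab T (pref b' k) (b' k).
  by apply: T_realizable; move: it; rewrite /internal; case: (depth T).
have ht := h_fits t (ltnSn t); have hk := h_fits k (ltnW (leq_trans kt (ltnSn t))).
rewrite /b' (pref_switch _ _ (leqnn t)) eqxx in ht.
rewrite /b' (pref_switch _ _ (ltnW kt)) (ltn_eqF kt) in hk.
rewrite /s_ -ht -hk; apply: h_lip; apply: branch_point_Xdom => //.
exact: internal_leq (ltnW kt) it.
Qed.

Lemma branch_gap_le_supnorm t k : internal (depth T) t -> (k < t)%N ->
  `|s_ t false - s_ t true| <= 2 * L * supnorm (x_ t) (x_ k).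
Proof.
move=> it kt.
have h0 := branch_label_lipschitz false it kt.
have h1 := branch_label_lipschitz true it kt.
have := ler_normD (s_ t false - s_ k (b k)) (s_ k (b k) - s_ t true).
rewrite distrC in h1; rewrite addrA subrK; lra.
Qed.

Lemma branch_gap_le1 t : internal (depth T) t -> gap q T (pref b t) <= 1.
Proof.
move=> it; apply: powR_le1 => //; rewrite normr_ge0 /=.
have := branch_label01 false it; have := branch_label01 true it.
rewrite -/(s_ t false) -/(s_ t true) ler_norml => /andP[? ?] /andP[? ?].
by apply/andP; split; lra.
Qed.

Let th := (2^-1 : R) `^ q.
Let radius j := (2^-1 : R) ^+ j / (2 * L).

Definition isolated j t : bool := [forall k : 'I_t, radius j < supnorm (x_ t) (x_ k)].

Lemma branch_gap_le_near t k j : internal (depth T) t -> (k < t)%N ->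
  supnorm (x_ t) (x_ k) <= radius j -> gap q T (pref b t) <= th ^+ j.
Proof.
move=> it kt near; rewrite /gap /lossq /th -powR_exprn ?invr_ge0 //.
apply: ge0_ler_powR; rewrite ?nnegrE ?exprn_ge0 ?invr_ge0 //.
apply: le_trans (branch_gap_le_supnorm it kt) _.
have -> : (2^-1 : R) ^+ j = 2 * L * radius j.
  by rewrite /radius mulrC divfK // mulf_neq0 // gt_eqF.
by rewrite ler_wpM2l // mulr_ge0 // ltW.
Qed.

(* Peeling scales: the gap at [t] is at most [th^j] unless [x_t] is isolated at
   scale [j + 1]. *)
Lemma branch_gap_le_isolated t J : internal (depth T) t ->
  gap q T (pref b t) <= th ^+ J + \sum_(j < J) (isolated j.+1 t)%:R * th ^+ j.
Proof.
move=> it; elim: J => [|J IH]; first by rewrite expr0 big_ord0 addr0 branch_gap_le1.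
rewrite big_ord_recr /=.
have th_ge0 : 0 <= th by exact: powR_ge0.
have S0 : 0 <= \sum_(j < J) (isolated j.+1 t)%:R * th ^+ j.
  by apply: sumr_ge0 => j _; rewrite mulr_ge0 ?exprn_ge0.
have thJ : 0 <= th ^+ J.+1 by rewrite exprn_ge0.
case iso : (isolated J.+1 t); first by rewrite mul1r; move: IH; lra.
move/negbT: iso; rewrite negb_forall => /existsP[k]; rewrite -leNgt => near.
have := branch_gap_le_near it (ltn_ord k) near.
rewrite mul0r addr0; lra.
Qed.

(* Isolated points lie in pairwise distinct cells of a grid of mesh [radius j]. *)
Lemma card_isolated_le j n :
  (#|[pred t : 'I_n | internal (depth T) t && isolated j t]|
    <= (grid_size (radius j)).+1 ^ d)%N.
Proof.
rewrite -card_cells.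
have r0 : 0 < radius j by rewrite divr_gt0 ?exprn_gt0 ?invr_gt0 // mulr_gt0.
apply: (@leq_card_in _ _ (fun t : 'I_n => cell (radius j) (x_ t))).
move=> t1 t2; rewrite !inE => /andP[i1 f1] /andP[i2 f2] ce.
have near := supnorm_lt_of_cell_eq r0 (branch_point_Xdom i1) (branch_point_Xdom i2) ce.
apply/val_inj; case: (ltngtP t1 t2) => // [lt12|lt21]; exfalso.
- by have := forallP f2 (Ordinal lt12); rewrite /= supnormC ltNge (ltW near).
- by have := forallP f1 (Ordinal lt21); rewrite /= ltNge (ltW near).
Qed.

Lemma grid_size_radius_le j : ((grid_size (radius j.+1)).+1)%:R <= 16 * L * 2 ^+ j.
Proof.
have r0 : 0 < radius j.+1 by rewrite divr_gt0 ?exprn_gt0 ?invr_gt0 // mulr_gt0.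
apply: le_trans (grid_sizeS_le r0) _.
have -> : 2 / radius j.+1 = 8 * L * 2 ^+ j.
  by rewrite /radius exprVn exprS invfM invrK; field; rewrite gt_eqF.
have : 1 <= (2 : R) ^+ j by rewrite exprn_ege1 // ler1n.
by move/(ler_pM ler01 ler01 L_ge1); rewrite mul1r; lra.
Qed.

Lemma card_isolated_ler j n :
  (#|[pred t : 'I_n | internal (depth T) t && isolated j.+1 t]|%:R : R)
    <= (16 * L * 2 ^+ j) ^+ d.
Proof.
apply: le_trans (_ : (((grid_size (radius j.+1)).+1 ^ d)%N%:R <= _)).
  by rewrite ler_nat card_isolated_le.
rewrite natrX lerXn2r ?nnegrE ?grid_size_radius_le //.
exact: le_trans (ler0n _ _) (grid_size_radius_le j).
Qed.

Lemma sum_branch_gaps_le n :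
  \sum_(t < n) (if internal (depth T) t then gap q T (pref b t) else 0) <=
  th ^+ n *+ n +
  \sum_(j < n) (#|[pred t : 'I_n | internal (depth T) t && isolated j.+1 t]|)%:R
               * th ^+ j.
Proof.
apply: le_trans (_ : \sum_(t < n) (th ^+ n + \sum_(j < n)
    (internal (depth T) t && isolated j.+1 t)%:R * th ^+ j) <= _).
  apply: ler_sum => t _; case: ifP => it; first exact: branch_gap_le_isolated.
  by rewrite big1 ?addr0 ?exprn_ge0 ?powR_ge0 // => j _; rewrite mul0r.
rewrite big_split /= sumr_const card_ord exchange_big /= lerD2l.
by under eq_bigr => j _ do rewrite -mulr_suml sumr_indicator_card.
Qed.

Lemma branch_gap_sum_le n : d%:R < q ->
  \sum_(t < n) (if internal (depth T) t then gap q T (pref b t) else 0) <=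
  (1 + 16 ^+ d * L ^+ d) / (1 - scale_ratio d q) ^+ 2.
Proof.
move=> dq; set r := scale_ratio d q.
have r01 : 0 <= r < 1 by rewrite scale_ratio_ge0 scale_ratio_lt1.
have th_ge0 : 0 <= th by exact: powR_ge0.
apply: le_trans (sum_branch_gaps_le n) _.
have iso_le : \sum_(j < n) (#|[pred t : 'I_n | internal (depth T) t &&
      isolated j.+1 t]|)%:R * th ^+ j <= 16 ^+ d * L ^+ d * \sum_(j < n) r ^+ j.
  rewrite mulr_sumr; apply: ler_sum => j _.
  apply: le_trans (ler_wpM2r (exprn_ge0 j th_ge0) (card_isolated_ler j n)) _.
  rewrite /r /scale_ratio !exprMn -exprM mulnC exprM -/th.
  by rewrite le_eqVlt; apply/orP; left; apply/eqP; ring.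
have last_le : th ^+ n *+ n <= ((1 - r) ^+ 2)^-1.
  by apply: mulrn_expr_le; rewrite ?th_ge0 ?scale_ratio_ge //; case/andP: r01.
have geom_le : 16 ^+ d * L ^+ d * \sum_(j < n) r ^+ j <=
    16 ^+ d * L ^+ d * ((1 - r) ^+ 2)^-1.
  by rewrite ler_wpM2l ?sum_expr_le // mulr_ge0 ?exprn_ge0 // ltW.
by rewrite mulrDl mul1r; lra.
Qed.

End Branch.

Lemma Donl_le (R : realType) (d : nat) (q L : R) :
  1 <= q -> 1 <= L -> d%:R < q ->
  (Donl d q L <= ((1 + 16 ^+ d * L ^+ d) / (1 - scale_ratio d q) ^+ 2)%:E)%E.
Proof.
move=> q1 L1 dq; apply: ge_ereal_sup => _ [T [wl re] <-].
pose b : nat -> bool := fun=> false.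
apply: le_trans (ereal_inf_lbound _) _; first by exists b.
apply: nneseries_le_ub => [t|k]; first by case: ifP => // _; rewrite lee_fin powR_ge0.
rewrite big_mkord (eq_bigr (fun t : 'I_k =>
    (if internal (depth T) t then gap q T (pref b t) else 0)%:E)); last first.
  by move=> t _; case: ifP.
by rewrite sumEFin lee_fin branch_gap_sum_le.
Qed.

Lemma HL_cst0 (R : realType) d (L : R) : 0 <= L -> HL d L (fun=> 0).
Proof.
move=> L0; split=> [x _|x y _ _]; first by rewrite lexx ler01.
by rewrite subrr normr0 mulr_ge0 ?supnorm_ge0.
Qed.

Lemma truncn_mulr_le (R : realType) (y : R) m : 0 <= y <= 1 ->
  (Num.truncn (y * m%:R) <= m)%N.
Proof.
move=> /andP[y0 y1]; rewrite -[X in (_ <= X)%N](@natrK R m); apply: le_truncn.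
by rewrite ler_piMl.
Qed.

Lemma truncn_mulr_inj_close (R : realType) (y z : R) m : (0 < m)%N ->
  0 <= y -> 0 <= z -> Num.truncn (y * m%:R) = Num.truncn (z * m%:R) ->
  `|y - z| <= m%:R^-1.
Proof.
move=> m_gt0 y0 z0 e; have m0 : 0 < (m%:R : R) by rewrite ltr0n.
have ay : 0 <= y * m%:R by rewrite mulr_ge0 // ltW.
have az : 0 <= z * m%:R by rewrite mulr_ge0 // ltW.
move: (truncn_itv ay) (truncn_itv az); rewrite e.
set n := Num.truncn _ => /andP[a1 a2] /andP[b1 b2].
rewrite -natr1 in a2 b2.
have h : `|y * m%:R - z * m%:R| <= 1 by rewrite ler_norml; apply/andP; split; lra.
rewrite -mulrBl normrM (gtr0_norm m0) in h.
by rewrite -(ler_pM2r m0) mulVf ?gt_eqF.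
Qed.

Section Cover.
Variables (R : realType) (d : nat) (q L : R).
Hypotheses (q_ge1 : 1 <= q) (L_ge1 : 1 <= L).
Variable k : nat.

Let L_gt0 : 0 < L. Proof. exact: lt_le_trans ltr01 L_ge1. Qed.
Let q_ge0 : 0 <= q. Proof. exact: le_trans ler01 q_ge1. Qed.

Let delta : R := (2^-1) ^+ k.+1.
Definition mesh : R := delta / (4 * L).
Definition levels : nat := 2 ^ k.+2.

Let pattern_type := {ffun {ffun 'I_d -> 'I_(grid_size mesh).+1} -> 'I_levels.+1}.

Definition pattern (u : pt R d -> R) : pattern_type :=
  [ffun c => inord (Num.truncn (u (cell_corner c) * levels%:R))].

Definition pattern_rep (p : pattern_type) : pt R d -> R :=
  match pselect (exists v, HL d L v /\ pattern v = p) with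
  | left H => proj1_sig (cid H)
  | right _ => fun=> 0
  end.

Lemma mesh_gt0 : 0 < mesh.
Proof. by rewrite divr_gt0 ?exprn_gt0 ?invr_gt0 // mulr_gt0. Qed.

Lemma pattern_rep_HL p : HL d L (pattern_rep p).
Proof.
rewrite /pattern_rep; case: pselect => [H|_]; last exact/HL_cst0/ltW.
by case: (proj2_sig (cid H)).
Qed.

Lemma pattern_repK u : HL d L u -> pattern (pattern_rep (pattern u)) = pattern u.
Proof.
move=> Hu; rewrite /pattern_rep; case: pselect => [H|N]; last by case: N; exists u.
by case: (proj2_sig (cid H)).
Qed.

Lemma pattern_eq_corner_close u v (c : {ffun 'I_d -> 'I_(grid_size mesh).+1}) :
  HL d L u -> HL d L v -> Xdom d (cell_corner c) -> pattern u = pattern v ->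
  `|u (cell_corner c) - v (cell_corner c)| <= delta / 2.
Proof.
move=> Hu Hv Xc /ffunP /(_ c); rewrite !ffunE => /(congr1 val).
have /andP[u0 u1] := proj1 Hu _ Xc; have /andP[v0 v1] := proj1 Hv _ Xc.
rewrite /= !inordK ?ltnS ?truncn_mulr_le ?u0 ?v0 // => /truncn_mulr_inj_close.
have -> : (levels%:R : R)^-1 = delta / 2.
  by rewrite /levels /delta natrX exprVn !exprS; field; rewrite expf_neq0.
by apply; rewrite ?expn_gt0.
Qed.

Lemma pattern_rep_close u x : HL d L u -> Xdom d x ->
  `|u x - pattern_rep (pattern u) x| <= delta.
Proof.
move=> Hu Xx; set v := pattern_rep (pattern u).
have Hv : HL d L v := pattern_rep_HL _.
have [Xz xz] := cell_corner_near mesh_gt0 Xx; set z := cell_corner _ in Xz xz.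
have L_mesh : L * mesh = delta / 4 by rewrite /mesh; field; rewrite gt_eqF.
have ux : `|u x - u z| <= delta / 4.
  rewrite -L_mesh; apply: le_trans (proj2 Hu _ _ Xx Xz) _.
  by apply: ler_wpM2l; [exact: ltW | exact: xz].
have vx : `|v z - v x| <= delta / 4.
  rewrite -L_mesh; apply: le_trans (proj2 Hv _ _ Xz Xx) _.
  by apply: ler_wpM2l; [exact: ltW | rewrite supnormC].
have uv : `|u z - v z| <= delta / 2.
  by apply: pattern_eq_corner_close => //; rewrite pattern_repK.
have := ler_normD (u x - u z) (u z - v x).
have := ler_normD (u z - v z) (v z - v x).
rewrite !addrA !subrK; lra.
Qed.

Definition pattern_count : nat := #|pattern_type|.

Lemma covnum_le_pattern_count eps : ((2^-1) `^ q) ^+ k.+1 <= eps ->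
  (covnum q L (HL d L) eps <= (pattern_count%:R)%:E)%E.
Proof.
move=> eps_ge; apply: ereal_inf_lbound; exists pattern_count => //.
exists (fun i => pattern_rep (enum_val i)); split=> [i|u Hu]; first exact: pattern_rep_HL.
exists (enum_rank (pattern u)); rewrite enum_rankK.
apply: ge_ereal_sup => _ [x Xx <-]; rewrite lee_fin /lossq.
apply: le_trans eps_ge; rewrite -powR_exprn ?invr_ge0 //.
by apply: ge0_ler_powR; rewrite ?nnegrE ?exprn_ge0 ?invr_ge0 ?pattern_rep_close.
Qed.

Lemma log2_pattern_count_le :
  ln (pattern_count%:R : R) / ln 2 <= (32 * L * 2 ^+ k) ^+ d * (k.+3)%:R.
Proof.
have ln2 : 0 < ln (2 : R) by rewrite ln_gt0 // ltr1n.
rewrite /pattern_count card_ffun card_cells card_ord natrX lnXn ?ltr0n //.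
set G := ((grid_size mesh).+1 ^ d)%N.
have ln_levels : ln (levels.+1%:R : R) <= ln 2 *+ k.+3.
  rewrite -lnXn ?ltr0n // ler_ln ?posrE ?ltr0n ?exprn_gt0 //.
  by rewrite -natrX ler_nat /levels [in X in (_ <= X)%N]expnS ltn_Pmull // expn_gt0.
apply: le_trans (_ : (k.+3 * G)%:R <= _).
  rewrite ler_pdivrMr // natrM; apply: le_trans (ler_wMn2r G ln_levels) _.
  by rewrite -mulrnA -[X in X <= _]mulr_natl natrM.
have grid_le : ((grid_size mesh).+1%:R : R) <= 32 * L * 2 ^+ k.
  apply: le_trans (grid_sizeS_le mesh_gt0) _.
  have -> : 2 / mesh = 16 * L * 2 ^+ k.
    by rewrite /mesh /delta exprVn exprS invfM invrK; field; rewrite gt_eqF.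
  have : 1 <= (2 : R) ^+ k by rewrite exprn_ege1 // ler1n.
  by move/(ler_pM ler01 ler01 L_ge1); rewrite mul1r; lra.
rewrite natrM mulrC ler_wpM2r // /G natrX lerXn2r ?nnegrE ?ler0n //.
exact: le_trans (ler0n _ _) grid_le.
Qed.

End Cover.

Lemma log2e_ge0 (R : realType) (c : \bar R) : (1 <= c)%E -> (0 <= log2e c)%E.
Proof. by case: c => [r||] //= r1; rewrite lee_fin divr_ge0 ?ln_ge0 // ler1n. Qed.

Lemma log2e_le (R : realType) (c : \bar R) (N : R) : (1 <= c)%E -> (c <= N%:E)%E ->
  (log2e c <= (ln N / ln 2)%:E)%E.
Proof.
case: c => [r||] //=; rewrite ?leey ?leNye // !lee_fin => r1 rN.
rewrite ler_pM2r ?invr_gt0 ?ln_gt0 ?ltr1n // ler_ln ?posrE //.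
  exact: lt_le_trans r1.
exact: lt_le_trans (le_trans r1 rN).
Qed.

Definition lipschitz_constant (R : realType) (d : nat) (q : R) : R :=
  3 * 32 ^+ d / (1 - scale_ratio d q) ^+ 2.

Section PhiBound.
Variables (R : realType) (d : nat) (q L : R).
Hypotheses (q_ge1 : 1 <= q) (L_ge1 : 1 <= L).

Let L_gt0 : 0 < L. Proof. exact: lt_le_trans ltr01 L_ge1. Qed.
Let th : R := (2^-1) `^ q.

Lemma covnum_ge1 e : (1 <= covnum q L (HL d L) e)%E.
Proof.
apply: le_ereal_inf_tmp => _ [n [g [_ Hg]] <-].
have [i _] := Hg _ (HL_cst0 d (ltW L_gt0)).
by rewrite lee_fin ler1n; case: n g Hg i => [|n] g Hg [].
Qed.

Lemma covnum_le1 e : 1 <= e -> (covnum q L (HL d L) e <= 1)%E.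
Proof.
move=> e1; apply: ereal_inf_lbound; exists 1%N => //.
exists (fun _ => fun=> 0); split=> [_|u Hu]; first exact/HL_cst0/ltW.
exists ord0; apply: ge_ereal_sup => _ [x Xx <-]; rewrite lee_fin /lossq subr0.
apply: le_trans e1; apply: powR_le1; last exact: le_trans ler01 q_ge1.
by rewrite normr_ge0 ger0_norm; have /andP[] := proj1 Hu x Xx.
Qed.

Definition scale_bound (k : nat) : R := (32 * L * 2 ^+ k) ^+ d * (k.+3)%:R.
Definition scale_itv (k : nat) : set R := [set` `]th ^+ k.+1, th ^+ k]].

(* A measurable step function dominating the integrand of [Phi], which need not
   be measurable itself. *)
Definition covnum_majorant (e : R) : \bar R :=
  (\sum_(k <oo) (scale_bound k * \1_(scale_itv k) e)%:E)%E.

Lemma th_gt0 : 0 < th. Proof. by rewrite powR_gt0 // invr_gt0. Qed.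

Lemma scale_bound_ge0 k : 0 <= scale_bound k.
Proof. by rewrite mulr_ge0 ?exprn_ge0 // !mulr_ge0 ?exprn_ge0 // ltW. Qed.

Lemma exists_scale_itv e : 0 < e -> e < 1 -> exists k, scale_itv k e.
Proof.
move=> e0 e1.
have small_scale : exists n, th ^+ n.+1 < e.
  exists (Num.truncn e^-1); set n := Num.truncn _.
  have th_le : th <= 2^-1.
    rewrite /th -[leRHS](@powRr1 _ (2^-1)) ?invr_ge0 //.
    by apply: ger_powR => //; rewrite invr_gt0 /= invf_le1 //; lra.
  apply: le_lt_trans (_ : ((n.+1)%:R)^-1 < e); last first.
    by rewrite -[ltRHS]invrK ltf_pV2 ?posrE ?invr_gt0 ?ltr0n ?truncnS_gt.
  apply: le_trans (_ : (2^-1) ^+ n.+1 <= _).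
    by rewrite lerXn2r ?nnegrE ?invr_ge0 // ltW // th_gt0.
  rewrite exprVn lef_pV2 ?posrE ?exprn_gt0 ?ltr0n // -natrX ler_nat.
  by rewrite ltnW // ltn_expl.
have [k k_lt k_min] := ex_minnP small_scale.
exists k; rewrite /scale_itv /= in_itv /= k_lt /=.
case: k k_lt k_min => [|k] _ k_min; first by rewrite expr0 ltW.
by rewrite leNgt; apply/negP => /k_min; rewrite ltnn.
Qed.

Lemma scale_term_ge0 k e : (0 <= (scale_bound k * \1_(scale_itv k) e)%:E)%E.
Proof. by rewrite lee_fin mulr_ge0 ?scale_bound_ge0. Qed.

Lemma scale_term_measurable k :
  measurable_fun [set: R] (fun e => (scale_bound k * \1_(scale_itv k) e)%:E).
Proof.
apply/measurable_EFinP; apply: measurable_funM => //.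
by apply: measurable_indic; exact: measurable_itv.
Qed.

Lemma covnum_majorant_ge0 e : (0 <= covnum_majorant e)%E.
Proof. by apply: nneseries_ge0 => n _ _; exact: scale_term_ge0. Qed.

Lemma covnum_majorant_measurable : measurable_fun [set: R] covnum_majorant.
Proof.
apply: ge0_emeasurable_sum => [k e _ _|k _]; first exact: scale_term_ge0.
exact: scale_term_measurable.
Qed.

Lemma covnum_majorant_ge k e :
  scale_itv k e -> ((scale_bound k)%:E <= covnum_majorant e)%E.
Proof.
move=> ke; apply: le_trans (nneseries_lim_ge k.+1 _) => [|n _ _].
  2: exact: scale_term_ge0.
rewrite big_nat_recr //= indicE mem_set // mulr1 leeDr //.
by apply: sume_ge0 => n _; exact: scale_term_ge0.
Qed.

Lemma log2_covnum_le_majorant e :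
  0 < e -> (log2e (covnum q L (HL d L) e) <= covnum_majorant e)%E.
Proof.
move=> e0; have [e1|e1] := ltP e 1.
  have [k ke] := exists_scale_itv e0 e1.
  apply: le_trans (covnum_majorant_ge ke).
  have cover := covnum_le_pattern_count d q_ge1 L_ge1 (k := k) (eps := e).
  apply: le_trans (log2e_le (covnum_ge1 e) (cover _)) _.
    by move: ke; rewrite /scale_itv /= in_itv /= => /andP[/ltW].
  by rewrite lee_fin (log2_pattern_count_le d L_ge1).
apply: le_trans _ (covnum_majorant_ge0 e).
by have := log2e_le (covnum_ge1 e) (covnum_le1 e1); rewrite ln1 mul0r.
Qed.

Lemma lebesgue_measure_scale_itv k :
  ((@lebesgue_measure R) (scale_itv k) <= (th ^+ k)%:E)%E.
Proof.
rewrite /scale_itv lebesgue_measure_itv /=; case: ifP => _.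
  by rewrite -EFinB lee_fin gerBl exprn_ge0 // ltW // th_gt0.
by rewrite lee_fin exprn_ge0 // ltW // th_gt0.
Qed.

Lemma integral_scale_term k :
  (\int[lebesgue_measure]_e (scale_bound k * \1_(scale_itv k) e)%:E
    <= (scale_bound k * th ^+ k)%:E)%E.
Proof.
have mI : measurable (scale_itv k) by exact: measurable_itv.
under eq_integral do rewrite EFinM.
rewrite ge0_integralZl_EFin ?scale_bound_ge0 //; last first.
  by apply/measurable_EFinP; exact: measurable_indic.
rewrite integral_indic // setIT (EFinM (scale_bound k)).
apply: lee_wpmul2l; first by rewrite lee_fin scale_bound_ge0.
exact: lebesgue_measure_scale_itv.
Qed.

Lemma sum_scale_bound_le n : d%:R < q ->
  \sum_(k < n) scale_bound k * th ^+ k <= lipschitz_constant d q * L ^+ d.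
Proof.
move=> dq; set r := scale_ratio d q.
have r01 : 0 <= r < 1 by rewrite scale_ratio_ge0 scale_ratio_lt1.
set K := 3 * 32 ^+ d * L ^+ d.
have K0 : 0 <= K by rewrite !mulr_ge0 ?exprn_ge0 // ltW.
have -> : lipschitz_constant d q * L ^+ d = K * ((1 - r) ^+ 2)^-1.
  by rewrite /lipschitz_constant /K; ring.
apply: le_trans (_ : \sum_(k < n) K * ((k.+1)%:R * r ^+ k) <= _); last first.
  by rewrite -mulr_sumr ler_wpM2l ?sum_natS_expr_le.
apply: ler_sum => k _.
have k3 : (k.+3%:R : R) <= 3 * k.+1%:R.
  by rewrite -natrM ler_nat mulnSr -addn3 leq_add2r leq_pmull.
have p0 : 0 <= 32 ^+ d * L ^+ d * r ^+ k.
  by rewrite !mulr_ge0 ?exprn_ge0 ?scale_ratio_ge0 // ltW.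
have -> : scale_bound k * th ^+ k = 32 ^+ d * L ^+ d * r ^+ k * k.+3%:R.
  by rewrite /scale_bound /r /scale_ratio !exprMn -exprM mulnC exprM; ring.
apply: le_trans (ler_wpM2l p0 k3) _.
by rewrite le_eqVlt; apply/orP; left; apply/eqP; rewrite /K; ring.
Qed.

Lemma Phi_HL_le : d%:R < q ->
  (Phi d q L (HL d L) <= (lipschitz_constant d q * L ^+ d)%:E)%E.
Proof.
move=> dq; rewrite /Phi.
apply: le_trans (_ : (\int[lebesgue_measure]_e covnum_majorant e <= _)%E).
  apply: (ge0_integral_le_ae_majorant _ _ _ _ (lebesgue_measure_set1 0)) => //.
  - by move=> e _; apply/log2e_ge0/covnum_ge1.
  - exact: covnum_majorant_measurable.
  - exact: covnum_majorant_ge0.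
  move=> e [e0 _] /eqP e_neq0.
  by apply: log2_covnum_le_majorant; rewrite lt_neqAle eq_sym e_neq0.
rewrite integral_nneseries // => [|k|k e _]; last 2 first.
- exact: scale_term_measurable.
- exact: scale_term_ge0.
apply: nneseries_le_ub => [k|n].
  by apply: integral_ge0 => e _; exact: scale_term_ge0.
apply: le_trans (_ : (\sum_(0 <= k < n) (scale_bound k * th ^+ k)%:E <= _)%E).
  by apply: lee_sum => k _; exact: integral_scale_term.
by rewrite big_mkord sumEFin lee_fin sum_scale_bound_le.
Qed.

End PhiBound.

Lemma Donl_le_lipschitz_constant (R : realType) (d : nat) (q L : R) :
  1 <= q -> 1 <= L -> d%:R < q ->
  (Donl d q L <= (lipschitz_constant d q * L ^+ d)%:E)%E.
Proof.
move=> q1 L1 dq; apply: le_trans (Donl_le q1 L1 dq) _; rewrite lee_fin.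
have r1 : 0 <= 1 - scale_ratio d q by rewrite subr_ge0 ltW // scale_ratio_lt1.
rewrite /lipschitz_constant mulrAC ler_wpM2r ?invr_ge0 ?exprn_ge0 //.
have Ld : 1 <= L ^+ d by rewrite exprn_ege1.
have h16 : 16 ^+ d * L ^+ d <= 32 ^+ d * L ^+ d.
  by rewrite ler_wpM2r ?lerXn2r ?nnegrE ?ler_nat // (le_trans ler01 Ld).
have h1 : L ^+ d <= 32 ^+ d * L ^+ d.
  by rewrite ler_peMl ?(le_trans ler01 Ld) ?exprn_ege1 ?ler1n.
lra.
Qed.

Lemma lipschitz_constant_ge0 (R : realType) (d : nat) (q : R) :
  d%:R < q -> 0 <= lipschitz_constant d q.
Proof.
move=> dq; have r1 : 0 <= 1 - scale_ratio d q by rewrite subr_ge0 ltW // scale_ratio_lt1.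
by rewrite /lipschitz_constant divr_ge0 ?mulr_ge0 ?exprn_ge0.
Qed.

Lemma approximation_factor_ge1 (R : realType) (q : R) : 1 <= q -> 1 <= 4 * 2 `^ (q - 1).
Proof.
move=> q1; have : 1 <= 2 `^ (q - 1) :> R.
  apply: (@le_trans _ _ (2 `^ 0)); first by rewrite powRr0.
  by apply: ler_powR; rewrite ?ler1n // subr_ge0.
lra.
Qed.

Theorem theoremA2 (R : realType) (d : nat) (q : R) :
  (1 <= d)%N -> (d%:R < q) ->
  exists C : R,
    forall L : R, 1 <= L ->
      (Phi d q L (HL d L) <= (C * L ^+ d)%:E)%E /\
      (Donl d q L <= (4 * 2 `^ (q - 1) * C * L ^+ d)%:E)%E.
Proof.
move=> d_ge1 dq; have q1 : 1 <= q by apply: ltW; apply: le_lt_trans dq; rewrite ler1n.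
exists (lipschitz_constant d q) => L L1.
split; first exact: Phi_HL_le.
apply: le_trans (Donl_le_lipschitz_constant q1 L1 dq) _.
rewrite -mulrA lee_fin ler_peMl ?approximation_factor_ge1 //.
by rewrite mulr_ge0 ?lipschitz_constant_ge0 ?exprn_ge0 // (le_trans ler01 L1).
Qed.
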